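(* Assume $f$ has a unique global maximizer $g$ and the problem contains no weak epistasis. Let $S\subseteq V$ and let $R$ be any assignment with $\mathcal C(R)=V\setminus\big(S\cup\mathcal{IN}(S)\cup\mathcal{IN}^2(S)\big)$. If $\big|\Psi_{\{(\mathcal{IN}(S)\setminus S,\,g)\}\cup R}[s]\big|=1$ for all $s\in S$, then $\psi_s=g[s]$ for all $s\in S$ and all $\psi\in\Psi_{\{(\mathcal{IN}(S)\setminus S,\,g)\}\cup R}$.
   Context: Fix $\ell\ge1$, loci $V=\{0,\dots,\ell-1\}$, chromosomes $\vec y\in\{0,1\}^V$, fitness $f:\{0,1\}^V\to\mathbb R$ (maximized) with unique global maximizer $g$. An assignment $A$ is a set of pairs $(v,a)$ ($v\in V$, $a\in\{0,1\}$) with at most one pair per locus; $A[v]=a$ if $(v,a)\in A$, else $A[v]=*$; coverage $\mathcal C(A)=\{v:A[v]\ne*\}$; for $T\subseteq V$, $\{(T,g)\}=\{(t,g[t]):t\in T\}$. $\Psi_A$ (constrained optima) is the set of chromosomes agreeing with $A$ on $\mathcal C(A)$ with maximum fitness among such chromosomes; $\Psi_A[v]=\{\psi_v:\psi\in\Psi_A\}$. Epistasis: for $v\in V$ and nonempty $S\subseteq V\setminus\{v\}$, $S\Rightarrow v$ iff for every $s\in S$ there exists an assignment $A$ with $\mathcal C(A)=S$ and $\Psi_A[v]\neq\Psi_{A\setminus\{(s,A[s])\}}[v]$; the empty set is never epistatic. An epistasis $S\Rightarrow v$ with $|S|\ge2$ is weak if no nonempty proper subset $T\subsetneq S$ has $T\Rightarrow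 v$; ''no weak epistasis'' means no epistasis is weak. $\mathcal{IN}(v)=\{u:\{u\}\Rightarrow v\}$, $\mathcal{IN}^2(v)=\{u:\exists w\in\mathcal{IN}(v),\ \{u\}\Rightarrow w\}$, and for $S\subseteq V$, $\mathcal{IN}(S)=\bigcup_{v\in S}\mathcal{IN}(v)$, $\mathcal{IN}^2(S)=\bigcup_{v\in S}\mathcal{IN}^2(v)$. *)

From mathcomp Require Import all_boot all_order all_algebra.
Set Implicit Arguments. Unset Strict Implicit. Unset Printing Implicit Defensive.
Import Order.TTheory GRing.Theory Num.Theory.
Local Open Scope ring_scope.

Definition chrom (l : nat) := {ffun 'I_l -> bool}.

(* An assignment: at most one value per locus; None encodes "*". *)
Definition asgn (l : nat) := {ffun 'I_l -> option bool}.

Definition acover (l : nat) (A : asgn l) : {set 'I_l} :=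
  [set v | A v != None].

Definition agrees (l : nat) (A : asgn l) (y : chrom l) : bool :=
  [forall v, if A v is Some a then y v == a else true].

Definition Psi (R : realDomainType) (l : nat) (f : chrom l -> R) (A : asgn l)
  : {set chrom l} :=
  [set x | agrees A x && [forall y, agrees A y ==> (f y <= f x)]].

Definition PsiAt (R : realDomainType) (l : nat) (f : chrom l -> R) (A : asgn l)
  (v : 'I_l) : {set bool} :=
  [set (x : chrom l) v | x in Psi f A].

Definition aremove (l : nat) (A : asgn l) (s : 'I_l) : asgn l :=
  [ffun v => if v == s then None else A v].

Definition asgn_of (l : nat) (T : {set 'I_l}) (g : chrom l) : asgn l :=
  [ffun v => if v \in T then Some (g v) else None].

(* union of assignments (used only for assignments with disjoint coverage) *)
Definition aunion (l : nat) (A B : asgn l) : asgn l :=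
  [ffun v => if A v is Some a then Some a else B v].

Definition epistatic (R : realDomainType) (l : nat) (f : chrom l -> R)
  (S : {set 'I_l}) (v : 'I_l) : bool :=
  [&& v \notin S, S != set0 &
  [forall s in S, exists A : asgn l,
    (acover A == S) && (PsiAt f A v != PsiAt f (aremove A s) v)]].

Definition weak_epistasis (R : realDomainType) (l : nat) (f : chrom l -> R)
  (S : {set 'I_l}) (v : 'I_l) : Prop :=
  epistatic f S v /\ (2 <= #|S|)%N /\
  ~ (exists T : {set 'I_l}, T != set0 /\ T \proper S /\ epistatic f T v).

Definition no_weak_epistasis (R : realDomainType) (l : nat) (f : chrom l -> R)
  : Prop := forall S v, ~ weak_epistasis f S v.

Definition unique_max (R : realDomainType) (l : nat) (f : chrom l -> R)
  (g : chrom l) : Prop := forall x, x != g -> f x < f g.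

Definition IN1 (R : realDomainType) (l : nat) (f : chrom l -> R) (v : 'I_l)
  : {set 'I_l} := [set u | epistatic f [set u] v].
Definition IN2 (R : realDomainType) (l : nat) (f : chrom l -> R) (v : 'I_l)
  : {set 'I_l} := [set u | [exists w in IN1 f v, epistatic f [set u] w]].
Definition INs (R : realDomainType) (l : nat) (f : chrom l -> R) (S : {set 'I_l})
  : {set 'I_l} := \bigcup_(v in S) IN1 f v.
Definition IN2s (R : realDomainType) (l : nat) (f : chrom l -> R) (S : {set 'I_l})
  : {set 'I_l} := \bigcup_(v in S) IN2 f v.

From mathcomp Require Import all_boot all_order all_algebra.
Set Implicit Arguments. Unset Strict Implicit. Unset Printing Implicit Defensive.
Import Order.TTheory GRing.Theory Num.Theory.

(* Let A be an assignment and W a set of loci such that every covered locus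
   u with {u} => v for some v in W lies in W and is assigned g[u].  Then, by
   induction on |T|, restricting A to any covered T leaves every constrained
   optimum equal to g on W \ T.  If keeping T moved the value at v, then
   T => v, because dropping any single locus of T restores g[v]; without weak
   epistasis some single u in T has {u} => v, so u is in W and assigned g[u].
   An optimum of A|T\u carrying g[u] at u then satisfies A|T, so imposing u
   only discards optima and cannot move v away from g[v].  In the corollary W
   is S together with IN(S)\S: a locus influencing W lies in IN(S) or IN^2(S),
   and there A assigns only through g. *)

Section ConstrainedOptima.
Variables (R : realDomainType) (l : nat) (f : chrom l -> R).
Local Open Scope ring_scope.

Lemma mem_Psi_refine (B B' : asgn l) x :
  (forall y, agrees B y -> agrees B' y) ->
  x \in Psi f B' -> agrees B x -> x \in Psi f B.
Proof.
move=> BB'; rewrite !inE => /andP[_ /forallP x_max] Bx.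
rewrite Bx; apply/forall_inP => y By; exact: (implyP (x_max y) (BB' y By)).
Qed.

Lemma Psi_refine_sub (B B' : asgn l) x :
  (forall y, agrees B y -> agrees B' y) ->
  x \in Psi f B' -> agrees B x -> Psi f B \subset Psi f B'.
Proof.
move=> BB' xB' Bx; apply/subsetP => z; rewrite !inE => /andP[Bz /forallP z_max].
move: xB'; rewrite inE => /andP[_ /forallP x_max].
rewrite BB' //; apply/forall_inP => y B'y.
exact: le_trans (implyP (x_max y) B'y) (implyP (z_max x) Bx).
Qed.

Lemma Psi_unique_max (g : chrom l) (B : asgn l) :
  unique_max f g -> agrees B g -> Psi f B = [set g].
Proof.
move=> g_max Bg; apply/setP => x; rewrite !inE.
apply/andP/eqP => [[_ /forallP x_max] | ->].
  apply/eqP; apply: contraT => xg.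
  by have := lt_le_trans (g_max x xg) (implyP (x_max g) Bg); rewrite ltxx.
split=> //; apply/forall_inP => y _.
by have [-> | yg] := eqVneq y g; [exact: lexx | exact: ltW (g_max y yg)].
Qed.

Lemma PsiAt_unique_max (g : chrom l) (B : asgn l) v :
  unique_max f g -> agrees B g -> PsiAt f B v = [set g v].
Proof. by move=> g_max Bg; rewrite /PsiAt (Psi_unique_max g_max Bg) imset_set1. Qed.

Lemma epistatic_singleton (T : {set 'I_l}) v :
  no_weak_epistasis f -> epistatic f T v ->
  exists2 u, u \in T & epistatic f [set u] v.
Proof.
move=> no_weak epTv.
(* A smallest epistatic subset of T has no epistatic proper subset. *)
pose P (T' : {set 'I_l}) := (T' \subset T) && epistatic f T' v.
have [T' /andP[sT'T epT'v] T'_min] := @arg_minnP _ T P (fun T' => #|T'|)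
  (introT andP (conj (subxx T) epTv)).
have T'_strong :
    ~ exists T'', T'' != set0 /\ T'' \proper T' /\ epistatic f T'' v.
  case=> T'' [_ [pT'' epT''v]]; have := T'_min T''.
  rewrite /P (subset_trans (proper_sub pT'') sT'T) epT''v => /(_ isT).
  by rewrite leqNgt proper_card.
have T'1 : #|T'| = 1%N.
  have /and3P[_ T'0 _] := epT'v.
  apply/eqP; rewrite eqn_leq lt0n cards_eq0 T'0 andbT leqNgt.
  by apply/negP => T'2; apply: (no_weak T' v).
have /eqP/cards1P[u T'u] := T'1.
by exists u; rewrite -?T'u // (subsetP sT'T) // T'u set11.
Qed.

Definition arestrict (A : asgn l) (T : {set 'I_l}) : asgn l :=
  [ffun v => if v \in T then A v else None].

Lemma acover_arestrict (A : asgn l) (T : {set 'I_l}) :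
  T \subset acover A -> acover (arestrict A T) = T.
Proof.
move=> sTA; apply/setP => v; rewrite !inE ffunE.
by case: ifP => // /(subsetP sTA); rewrite inE.
Qed.

Lemma arestrict_acover (A : asgn l) : arestrict A (acover A) = A.
Proof. by apply/ffunP => v; rewrite ffunE inE; case: (A v). Qed.

Lemma aremove_arestrict (A : asgn l) (T : {set 'I_l}) t :
  aremove (arestrict A T) t = arestrict A (T :\ t).
Proof. by apply/ffunP => v; rewrite !ffunE !inE; case: (v == t). Qed.

Lemma agrees_arestrict0 (A : asgn l) y : agrees (arestrict A set0) y.
Proof. by apply/forallP => v; rewrite ffunE inE. Qed.

Lemma agrees_arestrictS (A : asgn l) (T T' : {set 'I_l}) y :
  T' \subset T -> agrees (arestrict A T) y -> agrees (arestrict A T') y.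
Proof.
move=> sT'T /forallP Ty; apply/forallP => v; have := Ty v; rewrite !ffunE.
by case vT': (v \in T') => //; rewrite (subsetP sT'T v vT').
Qed.

Lemma agrees_arestrictD1 (A : asgn l) (T : {set 'I_l}) u a (y : chrom l) :
  A u = Some a -> y u = a ->
  agrees (arestrict A (T :\ u)) y -> agrees (arestrict A T) y.
Proof.
move=> Au yu /forallP Ty; apply/forallP => v; have := Ty v; rewrite !ffunE !inE.
by have [-> _ | //] := eqVneq v u; case: (u \in T); rewrite //= Au yu.
Qed.

Section ClosedLoci.
Variables (g : chrom l) (A : asgn l) (W : {set 'I_l}).
Hypothesis g_max : unique_max f g.
Hypothesis no_weak : no_weak_epistasis f.
Hypothesis W_closed : forall v u, v \in W -> u \in acover A ->
  epistatic f [set u] v -> u \in W.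
Hypothesis A_g_on_W : forall u, u \in W -> u \in acover A -> A u = Some (g u).

Lemma PsiAt_arestrict_closed (T : {set 'I_l}) v :
  T \subset acover A -> v \in W -> v \notin T ->
  PsiAt f (arestrict A T) v = [set g v].
Proof.
elim: {T}_.+1 {-2}T (ltnSn #|T|) v => // n IH T ltTn v sTA vW vT.
have IHD1 t w : t \in T -> w \in W -> w \notin T :\ t ->
    PsiAt f (arestrict A (T :\ t)) w = [set g w].
  move=> tT; apply: IH; last exact: subset_trans (subsetDl T _) sTA.
  by rewrite (cardsD1 t T) tT in ltTn.
have [-> | T0] := eqVneq T set0.
  by apply: PsiAt_unique_max => //; exact: agrees_arestrict0.
have [// | PsiAt_v] := eqVneq (PsiAt f (arestrict A T) v) [set g v].
have epTv : epistatic f T v.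
  rewrite /epistatic vT T0; apply/forall_inP => t tT; apply/existsP.
  exists (arestrict A T); rewrite acover_arestrict // eqxx aremove_arestrict.
  by rewrite IHD1 // !inE negb_and vT orbT.
have [u uT epuv] := epistatic_singleton no_weak epTv.
have uA := subsetP sTA u uT; have uW := W_closed vW uA epuv.
have T_sub y : agrees (arestrict A T) y -> agrees (arestrict A (T :\ u)) y.
  exact: agrees_arestrictS (subsetDl T _).
have : g u \in PsiAt f (arestrict A (T :\ u)) u.
  by rewrite IHD1 ?set11 // !inE eqxx.
case/imsetP => psi psiD1 psi_u.
have D1psi : agrees (arestrict A (T :\ u)) psi.
  by move: psiD1; rewrite inE => /andP[].
have Tpsi := agrees_arestrictD1 (A_g_on_W uW uA) (esym psi_u) D1psi.
have PsiAt_sub :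
    PsiAt f (arestrict A T) v \subset PsiAt f (arestrict A (T :\ u)) v.
  exact/imsetS/(Psi_refine_sub T_sub psiD1 Tpsi).
have psiv : psi v \in PsiAt f (arestrict A T) v.
  exact/imset_f/(mem_Psi_refine T_sub psiD1 Tpsi).
move: PsiAt_sub; rewrite IHD1 ?inE ?negb_and ?vT ?orbT // subset1.
by rewrite (negPf PsiAt_v) => /eqP PsiAt0; rewrite PsiAt0 inE in psiv.
Qed.
End ClosedLoci.

Lemma acover_asgn_of (T : {set 'I_l}) (g : chrom l) : acover (asgn_of T g) = T.
Proof. by apply/setP => v; rewrite !inE ffunE; case: (v \in T). Qed.

Lemma acover_aunion (A B : asgn l) : acover (aunion A B) = acover A :|: acover B.
Proof. by apply/setP => v; rewrite !inE ffunE; case: (A v). Qed.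

Lemma epistatic1_INs (S : {set 'I_l}) v u :
  v \in S :|: INs f S -> epistatic f [set u] v -> u \in INs f S :|: IN2s f S.
Proof.
rewrite !inE => /orP[vS | /bigcupP[s sS vs]] epuv.
  by apply/orP; left; apply/bigcupP; exists v; rewrite ?inE.
apply/orP; right; apply/bigcupP; exists s; rewrite // inE.
by apply/exists_inP; exists v.
Qed.

Section InfluenceClosure.
Variables (g : chrom l) (S : {set 'I_l}) (Ra : asgn l).
Hypothesis covRa : acover Ra = ~: (S :|: INs f S :|: IN2s f S).

Let G := INs f S :\: S.
Let A := aunion (asgn_of G g) Ra.

Lemma acover_influence u :
  u \in acover A -> u \in S :|: INs f S :|: IN2s f S -> u \in G.
Proof. by rewrite acover_aunion acover_asgn_of covRa !inE => /orP[|/negPf->]. Qed.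

Lemma PsiAt_influence_unique_max s :
  unique_max f g -> no_weak_epistasis f -> s \in S -> PsiAt f A s = [set g s].
Proof.
move=> g_max no_weak sS.
have sA : s \notin acover A.
  by apply/negP => /acover_influence; rewrite !inE sS => /(_ isT).
have sWIN : S :|: G \subset S :|: INs f S by rewrite setUS ?subsetDl.
rewrite -[A]arestrict_acover; apply: (PsiAt_arestrict_closed (W := S :|: G)) => //.
- move=> v u /(subsetP sWIN) vIN uA epuv; rewrite inE acover_influence ?orbT //.
  by rewrite -setUA inE (epistatic1_INs vIN epuv) orbT.
- move=> u /(subsetP sWIN) uIN uA.
  by rewrite /A !ffunE acover_influence // inE uIN.
- by rewrite inE sS.
Qed.
End InfluenceClosure.
End ConstrainedOptima.

Theorem corollary2 (R : realDomainType) (l : nat) (f : chrom l -> R)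
  (g : chrom l) (S : {set 'I_l}) (Ra : asgn l) :
  (0 < l)%N ->
  unique_max f g ->
  no_weak_epistasis f ->
  acover Ra = ~: (S :|: INs f S :|: IN2s f S) ->
  (forall s, s \in S ->
     #|PsiAt f (aunion (asgn_of (INs f S :\: S) g) Ra) s| = 1%N) ->
  forall s, s \in S ->
  forall psi, psi \in Psi f (aunion (asgn_of (INs f S :\: S) g) Ra) ->
    psi s = g s.
Proof.
move=> _ g_max no_weak covRa _ s sS psi psiA.
have : psi s \in PsiAt f (aunion (asgn_of (INs f S :\: S) g) Ra) s.
  exact: imset_f.
by rewrite PsiAt_influence_unique_max // inE => /eqP.
Qed.
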